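(* Let $\phi$ be the real root of $x^3=x^2+x+1$. Let $\langle a_i\rangle_{i=1}^\infty$ be a sequence of integers, not identically zero, with $a_i=a_{i+1}+a_{i+2}+a_{i+3}$ for all $i\ge 1$ and $a_1=0$. Then for every integer $n\ge 2$, either $|a_n|>0.01\phi^{n/2}$ or $|a_{n+1}|>0.01\phi^{(n+1)/2}$ (or both). *)

From Stdlib Require Import Reals ZArith.

From Stdlib Require Import Reals ZArith Lra Lia Psatz.
Open Scope R_scope.

(* With alpha = 1/phi, the forward recurrence x_(i+3) = x_i - x_(i+1) - x_(i+2) has
   characteristic polynomial (X - alpha) (X^2 + (1 + alpha) X + phi).  Hence the left
   eigenvector [decay_coord] of alpha is multiplied by alpha at each step, while
   [growth_form], the norm form of the quadratic factor evaluated on the differences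
   x_(i+1) - alpha x_i, is multiplied by phi (the product of the two complex roots).
   Starting from a_1 = 0 with integer a_2, a_3 not both zero, the growth form is at
   least 1 and dominates the square of the decay coordinate.  At time n the growth
   form is at least phi^(n-1) while the decay coordinate has become negligible, and
   the growth form is controlled by the decay coordinate and a_n, a_(n+1); so a_n and
   a_(n+1) cannot both be small. *)


Lemma geometric_closed_form (f : nat -> R) (r : R) :
  (forall k, f (S k) = r * f k) -> forall k, f k = r ^ k * f 0%nat.
Proof.
  intros hf k; induction k as [|k IH]; simpl.
  - ring.
  - rewrite hf, IH; ring.
Qed.

Lemma sqr_IZR_ge1 (z : Z) : z <> 0%Z -> 1 <= IZR z ^ 2.
Proof.
  intros hz.
  assert (IZR z <= -1 \/ 1 <= IZR z) as [h | h].
  { destruct (Z_lt_le_dec z 0); [left | right]; apply IZR_le; lia. }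
  all: nra.
Qed.

Lemma Rpower_half_sqr (x : R) (n : nat) :
  0 < x -> Rpower x (INR n / 2) ^ 2 = x ^ n.
Proof.
  intros hx.
  rewrite <- (Rpower_pow n x hx).
  replace (Rpower x (INR n / 2) ^ 2) with (Rpower x (INR n / 2 + INR n / 2))
    by (rewrite Rpower_plus; ring).
  f_equal; field.
Qed.

Lemma sqr_le_of_Rabs_le_Rpower_half (v x : R) (n : nat) :
  0 < x -> Rabs v <= Rpower x (INR n / 2) / 100 -> v ^ 2 <= x ^ n / 10000.
Proof.
  intros hx h.
  rewrite <- (Rpower_half_sqr x n hx), <- pow2_abs.
  replace (Rpower x (INR n / 2) ^ 2 / 10000) with ((Rpower x (INR n / 2) / 100) ^ 2) by field.
  apply pow_incr; split; [apply Rabs_pos | exact h].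
Qed.

Lemma recurrence_zero (b : nat -> R) :
  (forall k, b (S (S (S k))) = b k - b (S k) - b (S (S k))) ->
  b 0%nat = 0 -> b 1%nat = 0 -> b 2%nat = 0 -> forall k, b k = 0.
Proof.
  intros hb h0 h1 h2.
  assert (hwin : forall k, b k = 0 /\ b (S k) = 0 /\ b (S (S k)) = 0).
  { induction k as [|k (hk0 & hk1 & hk2)]; [auto |].
    repeat split; auto. rewrite hb, hk0, hk1, hk2; ring. }
  intros k; apply hwin.
Qed.

Section TribonacciBackward.

Variable phi : R.
Hypothesis hphi : phi ^ 3 = phi ^ 2 + phi + 1.

Lemma phi_bounds : 1839/1000 < phi < 18393/10000.
Proof. assert (0 < phi) by nra. split; nra. Qed.

Definition alpha := / phi.

Lemma alpha_mul_phi : alpha * phi = 1.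
Proof. pose proof phi_bounds. unfold alpha; field; lra. Qed.

Lemma alpha_add_sqr : alpha + alpha ^ 2 = phi - 1.
Proof.
  pose proof alpha_mul_phi as h.
  transitivity (alpha ^ 2 * (phi ^ 2 + phi + 1) - 1).
  - replace (alpha ^ 2 * (phi ^ 2 + phi + 1))
      with ((alpha * phi) ^ 2 + (alpha * phi) * alpha + alpha ^ 2) by ring.
    rewrite h; ring.
  - rewrite <- hphi.
    replace (alpha ^ 2 * phi ^ 3) with ((alpha * phi) ^ 2 * phi) by ring.
    rewrite h; ring.
Qed.

Lemma alpha_bounds : 5436/10000 < alpha < 5438/10000.
Proof. pose proof phi_bounds; pose proof alpha_mul_phi; split; nra. Qed.

Definition decay_coord (x0 x1 x2 : R) : R := x2 + (1 + alpha) * x1 + phi * x0.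

Definition growth_form (x0 x1 x2 : R) : R :=
  (x2 - alpha * x1) ^ 2 + (1 + alpha) * (x1 - alpha * x0) * (x2 - alpha * x1)
  + phi * (x1 - alpha * x0) ^ 2.

Lemma decay_coord_step (x0 x1 x2 : R) :
  decay_coord x1 x2 (x0 - x1 - x2) = alpha * decay_coord x0 x1 x2.
Proof.
  unfold decay_coord.
  replace (alpha * (x2 + (1 + alpha) * x1 + phi * x0))
    with (alpha * x2 + (alpha + alpha ^ 2) * x1 + alpha * phi * x0) by ring.
  rewrite alpha_add_sqr, alpha_mul_phi; ring.
Qed.

Lemma growth_form_step (x0 x1 x2 : R) :
  growth_form x1 x2 (x0 - x1 - x2) = phi * growth_form x0 x1 x2.
Proof.
  unfold growth_form.
  assert (hnext : x0 - x1 - x2 - alpha * x2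
                  = - (1 + alpha) * (x2 - alpha * x1) - phi * (x1 - alpha * x0)).
  { replace (- (1 + alpha) * (x2 - alpha * x1) - phi * (x1 - alpha * x0))
      with (- (1 + alpha) * x2 + (alpha + alpha ^ 2 - phi) * x1 + alpha * phi * x0) by ring.
    rewrite alpha_add_sqr, alpha_mul_phi; ring. }
  rewrite hnext; ring.
Qed.

Lemma growth_form_init (y z : R) :
  growth_form 0 y z = z ^ 2 + (1 - alpha) * y * z + (phi - alpha) * y ^ 2.
Proof. unfold growth_form; ring. Qed.

Lemma growth_form_init_ge1 (y z : Z) :
  (y <> 0 \/ z <> 0)%Z -> 1 <= growth_form 0 (IZR y) (IZR z).
Proof.
  intros hyz; rewrite growth_form_init.
  pose proof phi_bounds; pose proof alpha_bounds.
  destruct (Z.eq_dec y 0) as [-> | hy].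
  - destruct hyz as [hy | hz]; [contradiction |].
    pose proof (sqr_IZR_ge1 z hz); nra.
  - pose proof (sqr_IZR_ge1 y hy).
    set (c := phi - alpha - (1 - alpha) ^ 2 / 4).
    replace (IZR z ^ 2 + (1 - alpha) * IZR y * IZR z + (phi - alpha) * IZR y ^ 2)
      with ((IZR z + (1 - alpha) / 2 * IZR y) ^ 2 + c * IZR y ^ 2) by (unfold c; field).
    assert (1 <= c) by (unfold c; nra).
    pose proof (pow2_ge_0 (IZR z + (1 - alpha) / 2 * IZR y)).
    nra.
Qed.

Lemma decay_coord_init_sqr_le (y z : R) :
  decay_coord 0 y z ^ 2 <= 5/2 * growth_form 0 y z.
Proof.
  rewrite growth_form_init; unfold decay_coord.
  pose proof phi_bounds; pose proof alpha_bounds.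
  set (p := 1/2 - 9/2 * alpha).
  set (q := 5/2 * (phi - alpha) - (1 + alpha) ^ 2).
  assert (hdiff : 5/2 * (z ^ 2 + (1 - alpha) * y * z + (phi - alpha) * y ^ 2)
                  - (z + (1 + alpha) * y + phi * 0) ^ 2
                  = 3/2 * (z + p / 3 * y) ^ 2 + (q - p ^ 2 / 6) * y ^ 2)
    by (unfold p, q; field).
  assert (0 <= q - p ^ 2 / 6) by (unfold p, q; nra).
  pose proof (pow2_ge_0 (z + p / 3 * y)); pose proof (pow2_ge_0 y).
  nra.
Qed.

Lemma growth_form_le (x y z : R) :
  growth_form x y z <= 9/4 * decay_coord x y z ^ 2 + 44 * (x ^ 2 + y ^ 2).
Proof.
  pose proof phi_bounds; pose proof alpha_bounds.
  set (c := decay_coord x y z).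
  set (u := y - alpha * x).
  set (v := - (1 + 2 * alpha) * y - phi * x).
  assert (hform : growth_form x y z = (c + v) ^ 2 + (1 + alpha) * u * (c + v) + phi * u ^ 2)
    by (unfold growth_form, c, decay_coord, u, v; ring).
  assert (hcv : (c + v) ^ 2 + (1 + alpha) * u * (c + v) + phi * u ^ 2
                <= 9/4 * c ^ 2 + 4 * (u ^ 2 + v ^ 2)).
  { pose proof (pow2_ge_0 (c - 2 * v)).
    pose proof (pow2_ge_0 (3/2 * c - (1 + alpha) * u)).
    assert ((1 + alpha) ^ 2 * u ^ 2 <= 3 * u ^ 2)
      by (apply Rmult_le_compat_r; [apply pow2_ge_0 | nra]).
    assert (0 <= (1 + alpha) * (u - v) ^ 2)
      by (apply Rmult_le_pos; [lra | apply pow2_ge_0]).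
    assert ((1 + alpha) * (u ^ 2 + v ^ 2) <= 2 * (u ^ 2 + v ^ 2))
      by (apply Rmult_le_compat_r; [nra | lra]).
    assert (phi * u ^ 2 <= 2 * u ^ 2)
      by (apply Rmult_le_compat_r; [apply pow2_ge_0 | lra]).
    nra. }
  assert (huv : u ^ 2 + v ^ 2 <= 11 * (x ^ 2 + y ^ 2)).
  { pose proof (pow2_ge_0 (y + alpha * x)).
    pose proof (pow2_ge_0 ((1 + 2 * alpha) * y - phi * x)).
    assert (alpha ^ 2 * x ^ 2 <= 3/10 * x ^ 2)
      by (apply Rmult_le_compat_r; [apply pow2_ge_0 | nra]).
    assert ((1 + 2 * alpha) ^ 2 * y ^ 2 <= 44/10 * y ^ 2)
      by (apply Rmult_le_compat_r; [apply pow2_ge_0 | nra]).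
    assert (phi ^ 2 * x ^ 2 <= 34/10 * x ^ 2)
      by (apply Rmult_le_compat_r; [apply pow2_ge_0 | nra]).
    unfold u, v; nra. }
  lra.
Qed.

Section Orbit.

Variable b : nat -> R.
Hypothesis hb : forall k, b (S (S (S k))) = b k - b (S k) - b (S (S k)).

Lemma decay_coord_orbit (k : nat) :
  decay_coord (b k) (b (S k)) (b (S (S k))) = alpha ^ k * decay_coord (b 0) (b 1) (b 2).
Proof.
  apply (geometric_closed_form (fun k => decay_coord (b k) (b (S k)) (b (S (S k))))).
  intros j; rewrite hb; apply decay_coord_step.
Qed.

Lemma growth_form_orbit (k : nat) :
  growth_form (b k) (b (S k)) (b (S (S k))) = phi ^ k * growth_form (b 0) (b 1) (b 2).
Proof.
  apply (geometric_closed_form (fun k => growth_form (b k) (b (S k)) (b (S (S k))))).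
  intros j; rewrite hb; apply growth_form_step.
Qed.

Hypothesis hgrowth0 : 1 <= growth_form (b 0) (b 1) (b 2).
Hypothesis hdecay0 : decay_coord (b 0) (b 1) (b 2) ^ 2 <= 5/2 * growth_form (b 0) (b 1) (b 2).

Lemma orbit_lower_bound (k : nat) :
  (1 <= k)%nat -> (phi ^ S k + phi ^ S (S k)) / 10000 < b k ^ 2 + b (S k) ^ 2.
Proof.
  intros hk.
  pose proof phi_bounds.
  set (Q := growth_form (b 0) (b 1) (b 2)) in *.
  set (c := decay_coord (b 0) (b 1) (b 2)) in *.
  set (F := phi ^ k).
  set (d := decay_coord (b k) (b (S k)) (b (S (S k)))).
  set (s := b k ^ 2 + b (S k) ^ 2).
  assert (hQk : growth_form (b k) (b (S k)) (b (S (S k))) = F * Q) by apply growth_form_orbit.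
  assert (hdk : d * F = c).
  { unfold d, F; rewrite decay_coord_orbit; fold c.
    replace (alpha ^ k * c * phi ^ k) with ((alpha * phi) ^ k * c)
      by (rewrite Rpow_mult_distr; ring).
    rewrite alpha_mul_phi, pow1; ring. }
  assert (hF : phi <= F).
  { unfold F; rewrite <- (pow_1 phi) at 1; apply Rle_pow; [lra | exact hk]. }
  assert (hF3 : 62/10 <= F ^ 3).
  { assert (phi ^ 3 <= F ^ 3) by (apply pow_incr; lra). nra. }
  assert (hest : F * Q <= 9/4 * d ^ 2 + 44 * s).
  { rewrite <- hQk; apply growth_form_le. }
  apply Rnot_le_lt; intros hS.
  change (phi ^ S k + phi ^ S (S k)) with (phi * F + phi * (phi * F)) in hS.
  (* the decay coordinate contributes at most 9/4 * 5/2 * Q = 45/8 * Q < F ^ 3 * Q *)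
  assert (hF3Q : F ^ 3 * Q <= 45/8 * Q + 44 * (phi + phi ^ 2) / 10000 * F ^ 3).
  { assert (hmul : F ^ 2 * (F * Q) <= F ^ 2 * (9/4 * d ^ 2 + 44 * s))
      by (apply Rmult_le_compat_l; [apply pow2_ge_0 | exact hest]).
    replace (F ^ 2 * (9/4 * d ^ 2 + 44 * s)) with (9/4 * (d * F) ^ 2 + 44 * (F ^ 2 * s))
      in hmul by ring.
    rewrite hdk in hmul.
    assert (hsmall : F ^ 2 * s <= F ^ 2 * ((phi * F + phi * (phi * F)) / 10000))
      by (apply Rmult_le_compat_l; [apply pow2_ge_0 | exact hS]).
    nra. }
  assert (hcoef : 44 * (phi + phi ^ 2) / 10000 < 3/100) by nra.
  nra.
Qed.

End Orbit.

End TribonacciBackward.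

Section IntegerSequence.

Variable a : nat -> Z.
Hypothesis hrec :
  forall i : nat, (1 <= i)%nat -> a i = (a (i + 1)%nat + a (i + 2)%nat + a (i + 3)%nat)%Z.

Lemma IZR_shifted_recurrence (k : nat) :
  IZR (a (S (S (S (S k))))) = IZR (a (S k)) - IZR (a (S (S k))) - IZR (a (S (S (S k)))).
Proof.
  rewrite <- !minus_IZR; f_equal.
  specialize (hrec (S k) ltac:(lia)).
  replace (S k + 1)%nat with (S (S k)) in hrec by lia.
  replace (S k + 2)%nat with (S (S (S k))) in hrec by lia.
  replace (S k + 3)%nat with (S (S (S (S k)))) in hrec by lia.
  lia.
Qed.

Lemma second_or_third_neq0 :
  a 1%nat = 0%Z -> (exists i : nat, (1 <= i)%nat /\ a i <> 0%Z) ->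
  (a 2%nat <> 0 \/ a 3%nat <> 0)%Z.
Proof.
  intros ha1 [i [hi hai]].
  destruct (Z.eq_dec (a 2%nat) 0) as [h2 | h2]; [| now left].
  destruct (Z.eq_dec (a 3%nat) 0) as [h3 | h3]; [| now right].
  exfalso; apply hai, eq_IZR.
  replace i with (S (i - 1)) by lia.
  apply (recurrence_zero (fun k => IZR (a (S k)))); cbn beta.
  - apply IZR_shifted_recurrence.
  - now rewrite ha1.
  - now rewrite h2.
  - now rewrite h3.
Qed.

End IntegerSequence.

Theorem corollary1 (phi : R) (hphi : phi ^ 3 = phi ^ 2 + phi + 1)
  (a : nat -> Z)
  (hrec : forall i : nat, (1 <= i)%nat -> a i = (a (i + 1)%nat + a (i + 2)%nat + a (i + 3)%nat)%Z)
  (ha1 : a 1%nat = 0%Z)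
  (hnz : exists i : nat, (1 <= i)%nat /\ a i <> 0%Z) :
  forall n : nat, (2 <= n)%nat ->
    Rabs (IZR (a n)) > Rpower phi (INR n / 2) / 100 \/
    Rabs (IZR (a (n + 1)%nat)) > Rpower phi (INR (n + 1) / 2) / 100.
Proof.
  intros n hn.
  set (b := fun k => IZR (a (S k))).
  pose proof (IZR_shifted_recurrence a hrec) as hb.
  pose proof (second_or_third_neq0 a hrec ha1 hnz) as hinit.
  assert (hgrowth0 : 1 <= growth_form phi (b 0%nat) (b 1%nat) (b 2%nat))
    by (unfold b; rewrite ha1; apply (growth_form_init_ge1 phi hphi), hinit).
  assert (hdecay0 : decay_coord phi (b 0%nat) (b 1%nat) (b 2%nat) ^ 2
                    <= 5/2 * growth_form phi (b 0%nat) (b 1%nat) (b 2%nat))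
    by (unfold b; rewrite ha1; apply (decay_coord_init_sqr_le phi hphi)).
  destruct n as [|k]; [lia |].
  pose proof (orbit_lower_bound phi hphi b hb hgrowth0 hdecay0 k ltac:(lia)) as hlow.
  pose proof (phi_bounds phi hphi).
  destruct (Rle_or_lt (Rabs (IZR (a (S k)))) (Rpower phi (INR (S k) / 2) / 100)) as [hx | hx];
    [| now left].
  destruct (Rle_or_lt (Rabs (IZR (a (S k + 1)%nat))) (Rpower phi (INR (S k + 1) / 2) / 100))
    as [hy | hy]; [| now right].
  exfalso.
  apply sqr_le_of_Rabs_le_Rpower_half in hx, hy; try lra.
  rewrite Nat.add_1_r in hy; unfold b in hlow.
  lra.
Qed.
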